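(* Let $K$ be the Choi-Kraus operator space of a quantum channel $\mathcal{N}:\mathcal{L}(A')\to\mathcal{L}(B)$. Then $\kappa^{NS}(K)=\sqrt{\Upsilon(K)}$, so the one-shot NS-codes assisted zero-error quantum capacity of $K$ equals $\lfloor\sqrt{\Upsilon(K)}\rfloor$.
   Context: A quantum channel $\mathcal{N}(\rho)=\sum_j E_j\rho E_j^\dagger$ from $\mathcal{L}(A')$ to $\mathcal{L}(B)$; $A\cong A'$; the Choi matrix is $J_{AB}=\sum_{i,j}|i\rangle\langle j|_A\otimes\mathcal{N}(|i\rangle\langle j|_{A'})$, $K=\mathrm{span}\{E_j\}$, and $P_{AB}$ is the projection onto the support of $J_{AB}$. For $k>0$, $D^{NS}(K,k)$ is the maximum of $\operatorname{tr}P_{AB}(W_{AB}-\rho_A\otimes\mathbb{1}_B)$ over $W_{AB},\rho_A$ subject to $0\le W_{AB}\le\rho_A\otimes\mathbb{1}_B$, $\operatorname{tr}\rho_A=1$, $\operatorname{tr}_AW_{AB}=\frac{1}{k^2}\mathbb{1}_B$; and $\kappa^{NS}(K)=\max\{k\ge0: D^{NS}(K,k)=0\}$. The one-shot NS-assisted zero-error quantum capacity of $K$ is $\lfloor\kappa^{NS}(K)\rfloor$. The quantity $\Upsilon(K)$ (the NS-assisted zero-error classical capacity quantity of $K$) is the optimal value of: maximize $\operatorname{tr}S_A$ over operators $S_A$ on $A$ and $U_{AB}$ on $A\otimes B$ subject to $0\le U_{AB}\le S_A\otimes\mathbb{1}_B$, $\operatorname{tr}_AU_{AB}=\mathbb{1}_B$,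 $\operatorname{tr}P_{AB}(S_A\otimes\mathbb{1}_B-U_{AB})=0$. *)

From HB Require Import structures.
From mathcomp Require Import all_boot all_order all_algebra.
From mathcomp Require Import complex mxtens.
From mathcomp Require Import boolp classical_sets reals constructive_ereal ereal.
Set Implicit Arguments. Unset Strict Implicit. Unset Printing Implicit Defensive.
Import Order.TTheory GRing.Theory Num.Theory.
Local Open Scope ring_scope.
Local Open Scope classical_set_scope.

Section QDefs.
Variable R : realType.
Local Notation C := R[i].

Definition adjmx {p q : nat} (A : 'M[C]_(p, q)) : 'M[C]_(q, p) :=
  (map_mx (@conjc R) A)^T.

(* positive semidefinite: v^* A v >= 0 for all v (order of R[i]: real and >= 0) *)
Definition psdmx {d : nat} (A : 'M[C]_d) : Prop :=
  forall v : 'cV[C]_d, 0 <= (adjmx v *m A *m v) 0 0.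

Definition lemx {d : nat} (A B : 'M[C]_d) : Prop := psdmx (B - A).

(* partial trace over the first factor A of A (x) B, with the index
   convention of mxtens: (a,b) |-> a * dB + b *)
Definition ptraceA {dA dB : nat} (W : 'M[C]_(dA * dB)) : 'M[C]_dB :=
  \matrix_(j, j') \sum_(a < dA) W (mxtens_index (a, j)) (mxtens_index (a, j')).

Definition kraus_map {n m r : nat} (E : 'I_r -> 'M[C]_(m, n)) (X : 'M[C]_n)
  : 'M[C]_m := \sum_(j < r) (E j *m X *m adjmx (E j)).

(* quantum channel: trace preserving (CP holds by the Kraus form) *)
Definition is_channel {n m r : nat} (E : 'I_r -> 'M[C]_(m, n)) : Prop :=
  \sum_(j < r) (adjmx (E j) *m E j) = 1%:M.

Definition choi {n m r : nat} (E : 'I_r -> 'M[C]_(m, n)) : 'M[C]_(n * m) :=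
  \sum_(i < n) \sum_(j < n) (delta_mx i j *t kraus_map E (delta_mx i j)).

(* P is the (orthogonal) projection onto the support (range) of J *)
Definition support_proj {d : nat} (J P : 'M[C]_d) : Prop :=
  [/\ adjmx P = P, P *m P = P & (P^T == J^T)%MS].

Definition DNS_values {n m : nat} (P : 'M[C]_(n * m)) (k : R) : set R :=
  [set x | exists (W : 'M[C]_(n * m)) (rho : 'M[C]_n),
     [/\ psdmx W, lemx W (rho *t (1%:M : 'M[C]_m)),
         \tr rho = 1,
         ptraceA W = (real_complex R (k ^- 2))%:M
       & \tr (P *m (W - rho *t (1%:M : 'M[C]_m))) = real_complex R x]].

(* D^NS(K,k) = optimal value (max) of the SDP; -oo if infeasible *)
Definition DNS {n m : nat} (P : 'M[C]_(n * m)) (k : R) : \bar R :=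
  ereal_sup [set x%:E | x in DNS_values P k].

(* kappa^NS(K) = max { k > 0 : D^NS(K,k) = 0 } (taken as a supremum) *)
Definition kappaNS {n m : nat} (P : 'M[C]_(n * m)) : \bar R :=
  ereal_sup [set k%:E | k in [set k : R | 0 < k /\ DNS P k = (0%:E)]].

Definition oneshot_NS_Q {n m : nat} (P : 'M[C]_(n * m)) : int :=
  Num.floor (fine (kappaNS P)).

Definition Upsilon_values {n m : nat} (P : 'M[C]_(n * m)) : set R :=
  [set x | exists (S : 'M[C]_n) (U : 'M[C]_(n * m)),
     [/\ psdmx U, lemx U (S *t (1%:M : 'M[C]_m)),
         ptraceA U = 1%:M,
         \tr (P *m (S *t (1%:M : 'M[C]_m) - U)) = 0
       & \tr S = real_complex R x]].

Definition Upsilon {n m : nat} (P : 'M[C]_(n * m)) : \bar R :=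
  ereal_sup [set x%:E | x in Upsilon_values P].

End QDefs.

From HB Require Import structures.
From mathcomp Require Import all_boot all_order all_algebra.
From mathcomp Require Import complex mxtens.
From mathcomp Require Import boolp classical_sets reals constructive_ereal ereal.
From mathcomp Require Import lra ring.
From mathcomp Require Import topology normedtype matrix_normedtype derive.
Import numFieldNormedType.Exports.
Import Order.TTheory GRing.Theory Num.Theory.
Set Implicit Arguments. Unset Strict Implicit. Unset Printing Implicit Defensive.
Local Open Scope complex_scope.
Local Open Scope ring_scope.

(* Let u be the supremum of the Upsilon SDP.  It is finite: with J the Choi
   matrix, every feasible pair (S, U) has tr S = tr (U J) <= c tr U = c m for a
   constant c depending only on J.  Rescaling a feasible (S, U) of value s to
   (W, rho) = (U / u, S / s) gives a D^NS-feasible pair at k = sqrt u of value at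
   least -(1/s - 1/u) m, which tends to 0 as s tends to u; so D^NS(K, sqrt u) = 0.
   Conversely, if D^NS(K, k) = 0 then the supremum is attained, the feasible set
   being compact, and an optimal (W, rho) rescales to the Upsilon-feasible pair
   (k^2 rho, k^2 W), so k^2 <= u. *)

Section Adjoint.
Variable R : realType.
Local Notation C := R[i].

Lemma conjC_real (t : R) : (t%:C)^* = t%:C :> C.
Proof. exact: conjc_real. Qed.

Lemma adjmxE p q (A : 'M[C]_(p, q)) i j : adjmx A i j = (A j i)^*.
Proof. by rewrite !mxE. Qed.

Lemma adjmxD p q (A B : 'M[C]_(p, q)) : adjmx (A + B) = adjmx A + adjmx B.
Proof. by apply/matrixP => i j; rewrite !mxE rmorphD. Qed.

Lemma adjmxB p q (A B : 'M[C]_(p, q)) : adjmx (A - B) = adjmx A - adjmx B.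
Proof. by apply/matrixP => i j; rewrite !mxE rmorphB. Qed.

Lemma adjmxZ p q c (A : 'M[C]_(p, q)) : adjmx (c *: A) = c^* *: adjmx A.
Proof. by apply/matrixP => i j; rewrite !mxE rmorphM. Qed.

Lemma adjmx_tens p q s t (A : 'M[C]_(p, q)) (B : 'M[C]_(s, t)) :
  adjmx (A *t B) = adjmx A *t adjmx B.
Proof. by rewrite /adjmx map_mxT trmx_tens. Qed.

Lemma adjmx_delta p q (i : 'I_p) (j : 'I_q) :
  adjmx (delta_mx i j : 'M[C]_(p, q)) = delta_mx j i.
Proof. by apply/matrixP => a b; rewrite !mxE rmorph_nat andbC. Qed.

Lemma adjmx1 p : adjmx (1%:M : 'M[C]_p) = 1%:M.
Proof. by apply/matrixP => a b; rewrite !mxE rmorph_nat eq_sym. Qed.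

Lemma adjmx_col p q (A : 'M[C]_(p, q)) j : adjmx (col j A) = row j (adjmx A).
Proof. by apply/matrixP => a b; rewrite !mxE. Qed.

End Adjoint.

Section Sesquilinear.
Variables (R : realType) (d : nat).
Local Notation C := R[i].
Implicit Types (A X : 'M[C]_d) (u v w : 'cV[C]_d).

Definition sesq A u v : C := (adjmx u *m A *m v) 0 0.

Lemma psdmxP A : psdmx A <-> forall v, 0 <= sesq A v v.
Proof. by []. Qed.

Lemma sesqE A u v : sesq A u v = \sum_i \sum_j (u i 0)^* * A i j * v j 0.
Proof.
rewrite /sesq mxE exchange_big; apply: eq_bigr => j _; rewrite mxE mulr_suml.
by apply: eq_bigr => i _; rewrite !mxE.
Qed.

Lemma sesqDl A u1 u2 v : sesq A (u1 + u2) v = sesq A u1 v + sesq A u2 v.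
Proof. by rewrite /sesq adjmxD !mulmxDl mxE. Qed.

Lemma sesqDr A u v1 v2 : sesq A u (v1 + v2) = sesq A u v1 + sesq A u v2.
Proof. by rewrite /sesq !mulmxDr mxE. Qed.

Lemma sesqZl A c u v : sesq A (c *: u) v = c^* * sesq A u v.
Proof. by rewrite /sesq adjmxZ -!scalemxAl mxE. Qed.

Lemma sesqZr A c u v : sesq A u (c *: v) = c * sesq A u v.
Proof. by rewrite /sesq -!scalemxAr mxE. Qed.

Lemma sesqNl A u v : sesq A (- u) v = - sesq A u v.
Proof. by rewrite -scaleN1r sesqZl rmorphN rmorph1 mulN1r. Qed.

Lemma sesqNr A u v : sesq A u (- v) = - sesq A u v.
Proof. by rewrite -scaleN1r sesqZr mulN1r. Qed.

Lemma sesq_addA A B u v : sesq (A + B) u v = sesq A u v + sesq B u v.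
Proof. by rewrite /sesq mulmxDr mulmxDl mxE. Qed.

Lemma sesq_scaleA A c u v : sesq (c *: A) u v = c * sesq A u v.
Proof. by rewrite /sesq -scalemxAr -scalemxAl mxE. Qed.

Lemma sesq_delta A i j : sesq A (delta_mx i 0) (delta_mx j 0) = A i j.
Proof. by rewrite /sesq adjmx_delta -rowE -colE !mxE. Qed.

Lemma sesq_deltal A j v : sesq A (delta_mx j 0) v = (A *m v) j 0.
Proof. by rewrite /sesq adjmx_delta -rowE -row_mul mxE. Qed.

Lemma psdmxD A B : psdmx A -> psdmx B -> psdmx (A + B).
Proof. by move=> hA hB; apply/psdmxP => v; rewrite sesq_addA; exact: addr_ge0 (hA v) (hB v). Qed.

Lemma psdmxZ A c : 0 <= c -> psdmx A -> psdmx (c *: A).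
Proof. by move=> hc hA; apply/psdmxP => v; rewrite sesq_scaleA; exact: mulr_ge0 hc (hA v). Qed.

Lemma psdmx0 : psdmx (0 : 'M[C]_d).
Proof. by move=> v; rewrite mulmx0 mul0mx mxE. Qed.

Lemma psdmx1 : psdmx (1%:M : 'M[C]_d).
Proof.
move=> v; rewrite mulmx1 mxE sumr_ge0 // => i _.
by rewrite adjmxE mulrC mulcJ_ge0.
Qed.

Lemma psdmx_diag_ge0 A i : psdmx A -> 0 <= A i i.
Proof. by move=> hA; rewrite -sesq_delta; apply: hA. Qed.

Lemma psdmx_diag_le_tr A i : psdmx A -> A i i <= \tr A.
Proof.
move=> hA; rewrite /mxtrace (bigD1 i) //= lerDl sumr_ge0 // => j _.
exact: psdmx_diag_ge0.
Qed.

Lemma lin_quad_ge0_eq0 (a c : C) :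
  0 <= c -> (forall t : R, 0 <= t%:C * a + (t ^+ 2)%:C * c) -> a = 0.
Proof.
case: a c => [ar ai] [cr ci]; rewrite lecE /= => /andP[/eqP ci0 cr0] h.
have /andP[/eqP h1 _] := h 1; rewrite /= ci0 expr1n in h1.
have ai0 : ai = 0 by lra.
(* at [t = - ar / (cr + 1)] the quadratic equals [- ar^2 / (cr + 1)^2] *)
pose t := - ar / (cr + 1).
have cr1 : 0 < cr + 1 by lra.
have tE : t * (cr + 1) = - ar by rewrite /t divfK // gt_eqF.
have /andP[_ ht] := h t; rewrite /= ci0 !mul0r !subr0 in ht.
have ar0 : ar = 0.
  have : 0 <= (t * (cr + 1)) * (ar * (cr + 1)) + (t * (cr + 1)) ^+ 2 * cr by nra.
  by rewrite tE; nra.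
by rewrite ar0 ai0.
Qed.

Lemma psdmx_sesq0_mul0 X v : psdmx X -> sesq X v v = 0 -> X *m v = 0.
Proof.
move=> hX hv.
have hsq (t : R) : (t ^+ 2)%:C = t%:C * t%:C :> C by rewrite rmorphXn expr2.
have ii : 'i * 'i = -1 :> C by rewrite -expr2 sqr_i.
(* expand [(v + t c w)^* X (v + t c w) >= 0] for [c = 1] and [c = 'i] *)
have hre w : sesq X v w + sesq X w v = 0.
  apply: (lin_quad_ge0_eq0 (hX w)) => t; rewrite -/(sesq X w w).
  suff -> : t%:C * (sesq X v w + sesq X w v) + (t ^+ 2)%:C * sesq X w w =
            sesq X (v + t%:C *: w) (v + t%:C *: w) by apply: hX.
  rewrite sesqDl !sesqDr !sesqZl !sesqZr hv conjC_real hsq; ring.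
have him w : 'i * sesq X v w - 'i * sesq X w v = 0.
  apply: (lin_quad_ge0_eq0 (hX w)) => t; rewrite -/(sesq X w w).
  suff -> : t%:C * ('i * sesq X v w - 'i * sesq X w v) + (t ^+ 2)%:C * sesq X w w =
            sesq X (v + (t%:C * 'i) *: w) (v + (t%:C * 'i) *: w) by apply: hX.
  rewrite sesqDl !sesqDr !sesqZl !sesqZr hv hsq rmorphM /= conjC_real conjCi.
  by rewrite -[_ * sesq X w w]mulr1 -[1]opprK -ii; ring.
have hw w : sesq X w v = 0.
  have i0 : 'i != 0 :> C by rewrite -normr_eq0 normCi oner_eq0.
  have /eqP : sesq X v w - sesq X w v = 0.
    by apply: (mulfI i0); rewrite mulr0 mulrBr him.
  rewrite subr_eq0 => /eqP e; move: (hre w); rewrite e -mulr2n => /eqP.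
  by rewrite mulrn_eq0 => /eqP.
by apply/matrixP => a b; rewrite [b]ord1 -sesq_deltal hw mxE.
Qed.

End Sesquilinear.

Section Projection.
Variables (R : realType) (d : nat).
Local Notation C := R[i].
Implicit Types (Q X : 'M[C]_d).

Definition orthoproj Q := adjmx Q = Q /\ Q *m Q = Q.

Lemma orthoproj1B Q : orthoproj Q -> orthoproj (1%:M - Q).
Proof.
case=> Qadj QQ; split; first by rewrite adjmxB adjmx1 Qadj.
by rewrite mulmxBl !mulmxBr !mul1mx mulmx1 QQ subrr subr0.
Qed.

Lemma mxtrace_orthoprojE Q X :
  orthoproj Q -> \tr (Q *m X) = \sum_i sesq X (col i Q) (col i Q).
Proof.
case=> Qadj QQ; rewrite -{1}QQ -mulmxA mxtrace_mulC /mxtrace.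
apply: eq_bigr => i _; rewrite /sesq adjmx_col Qadj !mxE.
by apply: eq_bigr => k _; rewrite -row_mul !mxE.
Qed.

Lemma mxtrace_orthoproj_ge0 Q X : orthoproj Q -> psdmx X -> 0 <= \tr (Q *m X).
Proof. by move=> hQ hX; rewrite mxtrace_orthoprojE // sumr_ge0 // => i _; apply: hX. Qed.

Lemma mxtrace_orthoproj_le Q X : orthoproj Q -> psdmx X -> \tr (Q *m X) <= \tr X.
Proof.
move=> hQ hX; rewrite -subr_ge0.
by have := mxtrace_orthoproj_ge0 (orthoproj1B hQ) hX; rewrite mulmxBl mul1mx raddfB.
Qed.

Lemma mxtrace_orthoproj_eq0 Q X :
  orthoproj Q -> psdmx X -> \tr (Q *m X) = 0 -> X *m Q = 0.
Proof.
move=> hQ hX; rewrite mxtrace_orthoprojE // => /eqP.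
rewrite psumr_eq0 => [/allP h|i _]; last exact: hX.
apply/matrixP => a b; have /eqP/(psdmx_sesq0_mul0 hX)/matrixP/(_ a 0) := h b (mem_index_enum _).
rewrite [(0 : 'cV_d) a 0]mxE => e; rewrite [RHS]mxE -e !mxE.
by apply: eq_bigr => k _; rewrite mxE.
Qed.

End Projection.

Section Tensor.
Variable R : realType.
Local Notation C := R[i].

Lemma sum_delta_mull p (a : 'I_p) (F : 'I_p -> C) : \sum_i (a == i)%:R * F i = F a.
Proof.
rewrite (bigD1 a) //= eqxx mul1r big1 ?addr0 // => i /negbTE.
by rewrite eq_sym => ->; rewrite mul0r.
Qed.

Lemma sum_mxtens a b (F : 'I_(a * b) -> C) :
  \sum_k F k = \sum_i \sum_j F (mxtens_index (i, j)).
Proof.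
rewrite (pair_big xpredT xpredT (fun i j => F (mxtens_index (i, j)))) /=.
rewrite (reindex (@mxtens_index a b)) /=; first by apply: eq_bigr => -[i j].
by exists (@mxtens_unindex a b) => x _; rewrite (mxtens_indexK, mxtens_unindexK).
Qed.

Lemma mxtrace_ptraceA a b (U : 'M[C]_(a * b)) : \tr (ptraceA U) = \tr U.
Proof. by rewrite /mxtrace sum_mxtens exchange_big; apply: eq_bigr => j _; rewrite mxE. Qed.

Lemma ptraceAD a b (U V : 'M[C]_(a * b)) : ptraceA (U + V) = ptraceA U + ptraceA V.
Proof. by apply/matrixP => i j; rewrite !mxE -big_split; apply: eq_bigr => k _; rewrite mxE. Qed.

Lemma ptraceAZ a b c (U : 'M[C]_(a * b)) : ptraceA (c *: U) = c *: ptraceA U.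
Proof. by apply/matrixP => i j; rewrite !mxE mulr_sumr; apply: eq_bigr => k _; rewrite mxE. Qed.

Lemma ptraceA_tens1 a b (S : 'M[C]_a) : ptraceA (S *t (1%:M : 'M[C]_b)) = (\tr S)%:M.
Proof.
apply/matrixP => i j; rewrite !mxE -mulr_natr /mxtrace mulr_suml.
by apply: eq_bigr => k _; rewrite tensmxE !mxE.
Qed.

Lemma tensmxDl a b c d (A A' : 'M[C]_(a, b)) (B : 'M[C]_(c, d)) :
  (A + A') *t B = A *t B + A' *t B.
Proof. by apply/matrixP => i j; rewrite !mxE mulrDl. Qed.

Lemma tensmxZl a b c d k (A : 'M[C]_(a, b)) (B : 'M[C]_(c, d)) :
  (k *: A) *t B = k *: (A *t B).
Proof. by apply/matrixP => i j; rewrite !mxE mulrA. Qed.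

Lemma tensmx11 a b : (1%:M : 'M[C]_a) *t (1%:M : 'M[C]_b) = 1%:M.
Proof.
apply/matrixP => i j; case: (mxtens_indexP i) => i1 i2; case: (mxtens_indexP j) => j1 j2.
rewrite tensmxE !mxE (can_eq (@mxtens_indexK _ _)) xpair_eqE.
by case: (i1 == j1); case: (i2 == j2); rewrite ?mulr1 ?mulr0.
Qed.

Lemma sesq_tens a b (A : 'M[C]_a) (B : 'M[C]_b) (u : 'cV[C]_a) (w : 'cV[C]_b) :
  (adjmx (u *t w) *m (A *t B) *m (u *t w)) 0 0 = sesq A u u * sesq B w w.
Proof.
rewrite adjmx_tens !tensmx_mul mxE.
by case: (mxtens_unindex _) => i j; rewrite !ord1.
Qed.

Lemma psdmx_tens1 a b (S : 'M[C]_a) :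
  (0 < b)%N -> psdmx (S *t (1%:M : 'M[C]_b)) -> psdmx S.
Proof.
move=> b0 hS; apply/psdmxP => v; pose e := delta_mx (Ordinal b0) 0 : 'cV[C]_b.
by have := hS (v *t e); rewrite sesq_tens sesq_delta mxE eqxx mulr1.
Qed.

End Tensor.

Section Choi.
Variables (R : realType) (n m r : nat) (E : 'I_r -> 'M[R[i]]_(m, n)).
Local Notation C := R[i].

Lemma kraus_map_delta a a' b b' :
  kraus_map E (delta_mx a a') b b' = \sum_k E k b a * (E k b' a')^*.
Proof.
rewrite /kraus_map summxE; apply: eq_bigr => k _; rewrite mxE.
transitivity (\sum_l (a' == l)%:R * (E k b a * (E k b' l)^*)); last exact: sum_delta_mull.
apply: eq_bigr => l _; rewrite adjmxE mxE (bigD1 a) //= big1 => [|i /negbTE ia].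
  by rewrite !mxE eqxx /= addr0 mulrCA mulrA eq_sym.
by rewrite mxE ia mulr0.
Qed.

Lemma choiE a b a' b' :
  choi E (mxtens_index (a, b)) (mxtens_index (a', b')) = \sum_k E k b a * (E k b' a')^*.
Proof.
rewrite /choi summxE.
under eq_bigr => i _ do (rewrite summxE; under eq_bigr => j _ do
  rewrite tensmxE mxE -mulnb natrM -mulrA).
under eq_bigr => i _ do rewrite -mulr_sumr.
by rewrite sum_delta_mull sum_delta_mull kraus_map_delta.
Qed.

Definition kraus_vec k : 'cV[C]_(n * m) :=
  \col_x E k (mxtens_unindex x).2 (mxtens_unindex x).1.

Lemma choi_sum : choi E = \sum_k kraus_vec k *m adjmx (kraus_vec k).
Proof.
apply/matrixP => x y; case: (mxtens_indexP x) => a b; case: (mxtens_indexP y) => a' b'.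
rewrite choiE summxE; apply: eq_bigr => k _.
by rewrite mxE big_ord1 adjmxE !mxE !mxtens_indexK.
Qed.

Lemma mxtrace_mul_choi (U : 'M[C]_(n * m)) :
  \tr (U *m choi E) = \sum_k sesq U (kraus_vec k) (kraus_vec k).
Proof.
rewrite choi_sum mulmx_sumr raddf_sum; apply: eq_bigr => k _.
by rewrite /= mulmxA mxtrace_mulC /mxtrace big_ord1 mulmxA.
Qed.

Lemma sesq_tens1_kraus_vec (S : 'M[C]_n) k :
  sesq (S *t (1%:M : 'M[C]_m)) (kraus_vec k) (kraus_vec k) =
  \tr (S *m (adjmx (E k) *m E k)^T).
Proof.
rewrite sesqE sum_mxtens /mxtrace; apply: (@eq_bigr C) => a _.
rewrite mxE; under [RHS]eq_bigr => a' _ do rewrite !mxE mulr_sumr.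
under [LHS]eq_bigr => b _ do rewrite sum_mxtens.
rewrite exchange_big; apply: (@eq_bigr C) => a' _; apply: (@eq_bigr C) => b _.
transitivity (\sum_b' (b == b')%:R * (S a a' * ((E k b a)^* * E k b' a'))).
  by apply: (@eq_bigr C) => b' _; rewrite tensmxE !mxE !mxtens_indexK /=; ring.
by rewrite sum_delta_mull adjmxE.
Qed.

Lemma mxtrace_tens1_choi (S : 'M[C]_n) :
  is_channel E -> \tr ((S *t (1%:M : 'M[C]_m)) *m choi E) = \tr S.
Proof.
rewrite /is_channel => hE; rewrite mxtrace_mul_choi.
under eq_bigr do rewrite sesq_tens1_kraus_vec.
by rewrite -raddf_sum -mulmx_sumr -raddf_sum /= hE trmx1 mulmx1.
Qed.

End Choi.

Section QuadraticBound.
Variables (R : realType) (d : nat).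
Local Notation C := R[i].
Implicit Types (U : 'M[C]_d) (v w : 'cV[C]_d).

Lemma sesq_addv_le U v w : psdmx U ->
  sesq U (v + w) (v + w) <= 2%:R * sesq U v v + 2%:R * sesq U w w.
Proof.
move=> hU; rewrite -subr_ge0; apply: le_trans (hU (v - w)) _.
rewrite -/(sesq _ _ _) le_eqVlt; apply/orP; left; apply/eqP.
by rewrite !sesqDl !sesqDr !sesqNl !sesqNr; ring.
Qed.

Lemma sesq_sum_le U I (s : seq I) (F : I -> 'cV[C]_d) : psdmx U ->
  sesq U (\sum_(i <- s) F i) (\sum_(i <- s) F i) <=
  (2 ^ size s)%:R * \sum_(i <- s) sesq U (F i) (F i).
Proof.
move=> hU; elim: s => [|x s IH].
  by rewrite !big_nil -(scale0r 0) sesqZl rmorph0 mul0r mulr0.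
rewrite !big_cons /= expnS natrM -mulrA mulrDr [X in _ <= X]mulrDr.
apply: le_trans (sesq_addv_le _ _ hU) (lerD _ _); last by rewrite ler_pM2l ?ltr0n.
rewrite ler_pM2l ?ltr0n // -[leLHS]mul1r ler_wpM2r ?ler1n ?expn_gt0 //.
exact: hU.
Qed.

Lemma sesq_le_mxtrace U w : psdmx U ->
  sesq U w w <= (2 ^ d)%:R * sesq 1%:M w w * \tr U.
Proof.
move=> hU; have wE : w = \sum_i w i 0 *: delta_mx i 0.
  by rewrite {1}[w]matrix_sum_delta; apply: eq_bigr => i _; rewrite big_ord1.
rewrite {1 2}wE; apply: le_trans (sesq_sum_le _ _ hU) _.
have -> : size (index_enum 'I_d) = d.
  by rewrite -[RHS]card_ord cardE enumT /index_enum locked_withE.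
rewrite -mulrA ler_pM2l ?ltr0n ?expn_gt0 //.
rewrite /sesq mulmx1 mxE mulr_suml; apply: ler_sum => i _.
rewrite -/(sesq _ _ _) sesqZl sesqZr sesq_delta mulrA !mxE.
by rewrite ler_wpM2l ?psdmx_diag_le_tr // mulrC mulcJ_ge0.
Qed.

End QuadraticBound.

Section SupportProjection.
Variables (R : realType) (d : nat) (J P : 'M[R[i]]_d).
Hypothesis hJP : support_proj J P.

Lemma support_proj_orthoproj : orthoproj P.
Proof. by case: hJP. Qed.

Lemma support_proj_mulr0 X : psdmx X -> \tr (P *m X) = 0 -> X *m J = 0.
Proof.
move=> hX /(mxtrace_orthoproj_eq0 support_proj_orthoproj hX) XP0.
case: hJP => _ _ /andP[_ /submxP[D JD]].
by rewrite -[J]trmxK JD trmx_mul trmxK mulmxA XP0 mul0mx.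
Qed.

End SupportProjection.

Section Upsilon.
Variables (R : realType) (n m : nat).
Local Notation C := R[i].
Local Notation "S ⊗ 1" := (S *t (1%:M : 'M[C]_m)) (at level 40).
Implicit Types (P U W : 'M[C]_(n * m)) (S rho : 'M[C]_n).

Lemma has_ubound_Upsilon_values r (E : 'I_r -> 'M[C]_(m, n)) P :
  is_channel E -> support_proj (choi E) P -> has_ubound (Upsilon_values P).
Proof.
move=> hE hP; pose c := \sum_k (2 ^ (n * m))%:R * sesq 1%:M (kraus_vec E k) (kraus_vec E k).
have c0 : 0 <= c * m%:R.
  by rewrite mulr_ge0 ?ler0n ?sumr_ge0 // => k _; rewrite mulr_ge0 ?ler0n //; apply: psdmx1.
exists (complex.Re (c * m%:R)) => x [S [U [hU hSU htr hPX hS]]].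
(* [tr S = tr ((S ⊗ 1) J)] and [(S ⊗ 1 - U) J = 0], so [x = tr (U J)] *)
have xE : x%:C = \tr (U *m choi E).
  rewrite -hS -(mxtrace_tens1_choi _ hE) -[S ⊗ 1](subrK U) mulmxDl.
  by rewrite (support_proj_mulr0 hP hSU hPX) add0r.
have trU : \tr U = m%:R by rewrite -mxtrace_ptraceA htr mxtrace1.
rewrite -lecR xE (RRe_real (ger0_real c0)) mxtrace_mul_choi -trU /c mulr_suml.
by apply: ler_sum => k _; apply: sesq_le_mxtrace.
Qed.

Lemma Upsilon_values1 P : (0 < n)%N -> Upsilon_values P 1.
Proof.
move=> n0; pose S : 'M[C]_n := (n%:R^-1 : R)%:C *: 1%:M.
have trS : \tr S = 1.
  by rewrite mxtraceZ mxtrace1 -(rmorph_nat (real_complex R)) -rmorphM mulVf // pnatr_eq0 -lt0n.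
exists S, (S ⊗ 1); split => //.
- by rewrite tensmxZl tensmx11; apply: psdmxZ; [rewrite lecR invr_ge0 ler0n | exact: psdmx1].
- by rewrite /lemx subrr; apply: psdmx0.
- by rewrite ptraceA_tens1 trS.
- by rewrite subrr mulmx0 mxtrace0.
Qed.

Definition DNS_feasible (k : R) W rho :=
  [/\ psdmx W, lemx W (rho ⊗ 1), \tr rho = 1 & ptraceA W = (k ^- 2)%:C%:M].

Lemma DNS_valuesP P k x : DNS_values P k x <->
  exists W rho, DNS_feasible k W rho /\ \tr (P *m (W - rho ⊗ 1)) = x%:C.
Proof. by split => [[W [rho [? ? ? ? ?]]] | [W [rho [[? ? ? ?] ?]]]]; exists W, rho. Qed.

Lemma DNS_values_le0 P k x : orthoproj P -> DNS_values P k x -> x <= 0.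
Proof.
move=> hP /DNS_valuesP[W [rho [[_ hWrho _ _] hx]]].
rewrite -lecR rmorph0 -hx -oppr_ge0 -raddfN -mulmxN opprB.
exact: mxtrace_orthoproj_ge0.
Qed.

(* rescale an Upsilon-feasible pair: [W = U / u] and [rho = S / s] *)
Lemma DNS_values_of_Upsilon P s u : orthoproj P -> 0 < s -> s <= u ->
  Upsilon_values P s ->
  exists2 x, DNS_values P (Num.sqrt u) x & - (s^-1 - u^-1) * m%:R <= x.
Proof.
move=> hP s0 su [S [U [hU hSU htr hPX hS]]].
have u0 : 0 < u by apply: lt_le_trans su.
pose a : C := (s^-1)%:C; pose b : C := (u^-1)%:C.
have ab : 0 <= a - b by rewrite -rmorphB lecR subr_ge0 lef_pV2.
have a0 : 0 <= a by rewrite lecR invr_ge0 ltW.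
have b0 : 0 <= b by rewrite lecR invr_ge0 ltW.
have trU : \tr U = m%:R by rewrite -mxtrace_ptraceA htr mxtrace1.
have PU0 := mxtrace_orthoproj_ge0 hP hU.
have PUm : \tr (P *m U) <= m%:R by rewrite -trU mxtrace_orthoproj_le.
have rhoE : a *: S ⊗ 1 = a *: (S ⊗ 1 - U) + (a - b) *: U + b *: U.
  by rewrite tensmxZl scalerBr scalerBl addrA subrK addrNK.
exists (- (s^-1 - u^-1) * complex.Re (\tr (P *m U))).
  apply/DNS_valuesP; exists (b *: U), (a *: S); split; first split.
  - exact: psdmxZ.
  - by rewrite /lemx rhoE addrK; apply: psdmxD; apply: psdmxZ.
  - by rewrite mxtraceZ hS -rmorphM mulVf ?gt_eqF.
  - by rewrite ptraceAZ htr scalemx1 sqr_sqrtr ?ltW.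
  rewrite rhoE [X in b *: U - X]addrC opprD addrA subrr sub0r mulmxN mulmxDr raddfN raddfD /=.
  rewrite -!scalemxAr !mxtraceZ hPX mulr0 add0r -mulNr.
  by rewrite rmorphM rmorphN rmorphB /= RRe_real ?ger0_real.
rewrite !mulNr lerN2 ler_wpM2l ?subr_ge0 ?lef_pV2 ?posrE //.
by rewrite -lecR RRe_real ?ger0_real // rmorph_nat.
Qed.

Lemma Upsilon_values_sqr P k W rho : 0 < k -> DNS_feasible k W rho ->
  \tr (P *m (W - rho ⊗ 1)) = 0 -> Upsilon_values P (k ^+ 2).
Proof.
move=> k0 [hW hWrho htr hpt] hPX; pose c : C := (k ^+ 2)%:C.
have c0 : 0 <= c by rewrite lecR sqr_ge0.
exists (c *: rho), (c *: W); split.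
- exact: psdmxZ.
- by rewrite /lemx tensmxZl -scalerBr; apply: psdmxZ.
- by rewrite ptraceAZ hpt scale_scalar_mx -rmorphM mulfV ?rmorph1 // expf_neq0 ?gt_eqF.
- by rewrite tensmxZl -scalerBr -scalemxAr mxtraceZ -opprB mulmxN raddfN /= hPX oppr0 mulr0.
- by rewrite mxtraceZ htr mulr1.
Qed.

End Upsilon.

Local Open Scope classical_set_scope.

Section RealLinear.
Variables (R : realType) (N : nat).
Local Notation C := R[i].
Local Notation V := 'rV[R]_N.

Lemma additive_scalable_continuous (f : V -> R) :
  {morph f : x y / x + y} -> (forall a x, f (a *: x) = a * f x) -> continuous f.
Proof.
move=> fD fZ; have f0 : f 0 = 0 by rewrite -(scale0r 0) fZ mul0r.
have -> : f = fun x => \sum_i x 0 i * f (delta_mx 0 i).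
  apply: funext => x; rewrite {1}(row_sum_delta x) (big_morph f fD f0).
  by apply: eq_bigr => i _; rewrite fZ.
apply: continuous_big => [|i _]; first exact: add_continuous.
by move=> x; apply: continuousM; [exact: coord_continuous | exact: cst_continuous].
Qed.

Definition Rlinear_form (L : V -> C) :=
  {morph L : x y / x + y} /\ forall (a : R) x, L (a *: x) = a%:C * L x.

Definition Rlinear_mx p q (G : V -> 'M[C]_(p, q)) :=
  {morph G : x y / x + y} /\ forall (a : R) x, G (a *: x) = a%:C *: G x.

Lemma Rlinear_form_Re L : Rlinear_form L -> continuous (fun x => complex.Re (L x)).
Proof.
case=> LD LZ; apply: additive_scalable_continuous => [x y | a x].
  by rewrite LD; case: (L x) (L y) => ? ? [].
by rewrite LZ; case: (L x) => ? ? /=; rewrite mul0r subr0.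
Qed.

Lemma Rlinear_form_Im L : Rlinear_form L -> continuous (fun x => complex.Im (L x)).
Proof.
case=> LD LZ; apply: additive_scalable_continuous => [x y | a x].
  by rewrite LD; case: (L x) (L y) => ? ? [].
by rewrite LZ; case: (L x) => ? ? /=; rewrite mul0r addr0.
Qed.

Lemma closed_Rlinear_form_ge0 L : Rlinear_form L -> closed [set x | 0 <= L x].
Proof.
move=> hL; have -> : [set x | 0 <= L x] =
    (fun x => complex.Re (L x)) @^-1` [set y | 0 <= y] `&`
    (fun x => complex.Im (L x)) @^-1` [set y | y = 0].
  apply/seteqP; split => x /=; rewrite lecE /=; first by case/andP => /eqP <-.
  by case=> -> ->; rewrite eqxx.
by apply: closedI; apply: preimage_closed;
  [move=> x _; apply: Rlinear_form_Re | exact: closed_ge |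
   move=> x _; apply: Rlinear_form_Im | exact: closed_eq].
Qed.

Lemma closed_Rlinear_form_eq L c : Rlinear_form L -> closed [set x | L x = c].
Proof.
move=> hL; have -> : [set x | L x = c] =
    (fun x => complex.Re (L x)) @^-1` [set y | y = complex.Re c] `&`
    (fun x => complex.Im (L x)) @^-1` [set y | y = complex.Im c].
  apply/seteqP; split => x /=; first by move=> ->.
  by case: (L x) c => ? ? [? ?] /= [-> ->].
by apply: closedI; apply: preimage_closed;
  [move=> x _; apply: Rlinear_form_Re | exact: closed_eq |
   move=> x _; apply: Rlinear_form_Im | exact: closed_eq].
Qed.

Lemma Rlinear_mx_entry p q (G : V -> 'M[C]_(p, q)) i j :
  Rlinear_mx G -> Rlinear_form (fun x => G x i j).
Proof. by case=> GD GZ; split => [x y | a x]; rewrite ?GD ?GZ mxE. Qed.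

Lemma Rlinear_mxtrace p (G : V -> 'M[C]_p) :
  Rlinear_mx G -> Rlinear_form (fun x => \tr (G x)).
Proof. by case=> GD GZ; split => [x y | a x]; rewrite ?GD ?GZ ?mxtraceD ?mxtraceZ. Qed.

Lemma Rlinear_mull p q s (A : 'M[C]_(s, p)) (G : V -> 'M[C]_(p, q)) :
  Rlinear_mx G -> Rlinear_mx (fun x => A *m G x).
Proof. by case=> GD GZ; split => [x y | a x]; rewrite ?GD ?GZ ?mulmxDr // scalemxAr. Qed.

Lemma Rlinear_mulr p q s (B : 'M[C]_(q, s)) (G : V -> 'M[C]_(p, q)) :
  Rlinear_mx G -> Rlinear_mx (fun x => G x *m B).
Proof. by case=> GD GZ; split => [x y | a x]; rewrite ?GD ?GZ ?mulmxDl // scalemxAl. Qed.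

Lemma Rlinear_mxB p q (G1 G2 : V -> 'M[C]_(p, q)) :
  Rlinear_mx G1 -> Rlinear_mx G2 -> Rlinear_mx (fun x => G1 x - G2 x).
Proof.
case=> G1D G1Z [G2D G2Z]; split => [x y | a x]; last by rewrite G1Z G2Z scalerBr.
by rewrite G1D G2D opprD addrACA.
Qed.

Lemma Rlinear_tensmxr p q s t (B : 'M[C]_(s, t)) (G : V -> 'M[C]_(p, q)) :
  Rlinear_mx G -> Rlinear_mx (fun x => G x *t B).
Proof. by case=> GD GZ; split => [x y | a x]; rewrite ?GD ?GZ ?tensmxDl ?tensmxZl. Qed.

Lemma Rlinear_ptraceA a b (G : V -> 'M[C]_(a * b)) :
  Rlinear_mx G -> Rlinear_mx (fun x => ptraceA (G x)).
Proof. by case=> GD GZ; split => [x y | c x]; rewrite ?GD ?GZ ?ptraceAD ?ptraceAZ. Qed.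

Lemma closed_psdmx p (G : V -> 'M[C]_p) : Rlinear_mx G -> closed [set x | psdmx (G x)].
Proof.
move=> hG; rewrite [X in closed X](_ : _ =
    \bigcap_(v in [set: 'cV[C]_p]) [set x | 0 <= (adjmx v *m G x *m v) 0 0]).
  apply: closed_bigI => v _; apply/closed_Rlinear_form_ge0/Rlinear_mx_entry.
  exact/Rlinear_mulr/Rlinear_mull.
by apply/seteqP; split => x /= hx v; [move=> _; apply: hx | apply: hx].
Qed.

Lemma closed_Rlinear_mx_eq p q (G : V -> 'M[C]_(p, q)) A :
  Rlinear_mx G -> closed [set x | G x = A].
Proof.
move=> hG; rewrite [X in closed X](_ : _ = \bigcap_(ij in [set: 'I_p * 'I_q])
    [set x | G x ij.1 ij.2 = A ij.1 ij.2]).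
  by apply: closed_bigI => ij _; apply/closed_Rlinear_form_eq/Rlinear_mx_entry.
apply/seteqP; split => x /= hx; first by move=> ij _ /=; rewrite hx.
by apply/matrixP => i j; apply: (hx (i, j)).
Qed.

End RealLinear.

Section EntryBound.
Variable R : realType.
Local Notation C := R[i].

Definition mx_bounded p (t : R) (A : 'M[C]_p) :=
  forall i j, `|complex.Re (A i j)| <= t /\ `|complex.Im (A i j)| <= t.

Lemma mx_boundedW p (A : 'M[C]_p) (t t' : R) :
  t <= t' -> mx_bounded t A -> mx_bounded t' A.
Proof. by move=> tt' hA i j; have [? ?] := hA i j; split; apply: le_trans tt'. Qed.

Lemma psdmx_bounded d (Y : 'M[C]_d) (t : R) :
  psdmx Y -> \tr Y = t%:C -> mx_bounded t Y.
Proof.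
move=> hY trY i j.
have hii := psdmx_diag_ge0 i hY; have hjj := psdmx_diag_ge0 j hY.
have := psdmx_diag_le_tr i hY; have := psdmx_diag_le_tr j hY; rewrite trY.
(* test [Y] against [e_i + c e_j] for [c = 1, -1, 'i, -'i] *)
have test (c : C) : 0 <= Y i i + c * Y i j + c^* * Y j i + c^* * c * Y j j.
  have := hY (delta_mx i 0 + c *: delta_mx j 0); rewrite -/(sesq _ _ _).
  by rewrite !sesqDl !sesqDr !sesqZl !sesqZr !sesq_delta; congr (0 <= _); ring.
have := test (1 +i* 0); have := test ((-1) +i* 0).
have := test (0 +i* 1); have := test (0 +i* (-1)).
move: hii hjj; case: (Y i i) => ? ?; case: (Y j j) => ? ?.
case: (Y i j) => ? ?; case: (Y j i) => ? ?.
rewrite !lecE /= => /andP[/eqP ? ?] /andP[/eqP ? ?] /andP[/eqP ? ?] /andP[/eqP ? ?].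
move=> /andP[/eqP ? ?] /andP[/eqP ? ?] /andP[/eqP ? ?] /andP[/eqP ? ?].
by rewrite !ler_norml; split; apply/andP; split; lra.
Qed.

End EntryBound.

Section PairCoordinates.
Variables (R : realType) (a b : nat).
Local Notation C := R[i].
Local Notation N := (a * a + b * b)%N.
Local Notation V := 'rV[R]_(N + N).

(* a pair of complex matrices is stored as the real parts of its entries
   followed by their imaginary parts *)
Definition coordC (x : V) (k : 'I_N) : C := x 0 (lshift N k) +i* x 0 (rshift N k).
Definition fstmx (x : V) : 'M[C]_a :=
  \matrix_(i, j) coordC x (lshift (b * b) (mxtens_index (i, j))).
Definition sndmx (x : V) : 'M[C]_b :=
  \matrix_(i, j) coordC x (rshift (a * a) (mxtens_index (i, j))).

Definition pair_entry (A : 'M[C]_a) (B : 'M[C]_b) (k : 'I_N) : C :=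
  match split k with
  | inl l => A (mxtens_unindex l).1 (mxtens_unindex l).2
  | inr l => B (mxtens_unindex l).1 (mxtens_unindex l).2
  end.

Definition pair_rV (A : 'M[C]_a) (B : 'M[C]_b) : V :=
  \row_k match split k with
  | inl l => complex.Re (pair_entry A B l)
  | inr l => complex.Im (pair_entry A B l)
  end.

Lemma fstmx_pair A B : fstmx (pair_rV A B) = A.
Proof.
apply/matrixP => i j; rewrite !mxE /coordC !mxE (unsplitK (inl _)) (unsplitK (inr _)).
by rewrite /pair_entry (unsplitK (inl _)) mxtens_indexK; case: (A i j).
Qed.

Lemma sndmx_pair A B : sndmx (pair_rV A B) = B.
Proof.
apply/matrixP => i j; rewrite !mxE /coordC !mxE (unsplitK (inl _)) (unsplitK (inr _)).
by rewrite /pair_entry (unsplitK (inr _)) mxtens_indexK; case: (B i j).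
Qed.

Lemma coordC_scale (c : R) x k : coordC (c *: x) k = c%:C * coordC x k.
Proof. by rewrite /coordC !mxE; apply/eqP; rewrite eq_complex /= !mul0r subr0 addr0 !eqxx. Qed.

Lemma Rlinear_fstmx : Rlinear_mx fstmx.
Proof.
by split => [x y | c x]; apply/matrixP => i j; rewrite !mxE ?coordC_scale // /coordC !mxE.
Qed.

Lemma Rlinear_sndmx : Rlinear_mx sndmx.
Proof.
by split => [x y | c x]; apply/matrixP => i j; rewrite !mxE ?coordC_scale // /coordC !mxE.
Qed.

Lemma coord_bounded t x : mx_bounded t (fstmx x) -> mx_bounded t (sndmx x) ->
  forall k, `|x 0 k| <= t.
Proof.
move=> hA hB k.
have bounded_entry l :
    `|complex.Re (coordC x l)| <= t /\ `|complex.Im (coordC x l)| <= t.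
  case: (split_ordP l) => l' ->; case: (mxtens_indexP l') => i j;
    [have := hA i j | have := hB i j]; by rewrite !mxE.
by case: (split_ordP k) => l ->; have [] := bounded_entry l.
Qed.

End PairCoordinates.

Section Attainment.
Variables (R : realType) (n m : nat) (P : 'M[R[i]]_(n * m)).
Local Notation C := R[i].
Local Notation "S ⊗ 1" := (S *t (1%:M : 'M[C]_m)) (at level 40).
Local Notation N := ((n * m) * (n * m) + n * n)%N.
Local Notation V := 'rV[R]_(N + N).

Definition DNS_feasible_set (k : R) : set V :=
  [set x | DNS_feasible k (fstmx x) (sndmx x)].

Lemma closed_DNS_feasible_set k : closed (DNS_feasible_set k).
Proof.
rewrite (_ : DNS_feasible_set k = [set x | psdmx (fstmx x)] `&`
    [set x | psdmx (sndmx x ⊗ 1 - fstmx x)] `&` [set x | \tr (sndmx x) = 1] `&`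
    [set x | ptraceA (fstmx x) = (k ^- 2)%:C%:M]).
  apply: closedI; [apply: closedI; [apply: closedI |] |].
  - exact/closed_psdmx/Rlinear_fstmx.
  - apply/closed_psdmx/Rlinear_mxB; last exact: Rlinear_fstmx.
    exact/Rlinear_tensmxr/Rlinear_sndmx.
  - exact/closed_Rlinear_form_eq/Rlinear_mxtrace/Rlinear_sndmx.
  - exact/closed_Rlinear_mx_eq/Rlinear_ptraceA/Rlinear_fstmx.
by apply/seteqP; split => x /=; [case | move=> [[[]]]].
Qed.

Lemma DNS_feasible_set_bounded k x : (0 < m)%N -> DNS_feasible_set k x ->
  forall q, `|x 0 q| <= k ^- 2 * m%:R + 1.
Proof.
move=> m0 [hW hWrho htr hpt].
have ge0 : 0 <= k ^- 2 * m%:R by rewrite mulr_ge0 ?invr_ge0 ?sqr_ge0.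
apply: coord_bounded.
  apply: (mx_boundedW (t := k ^- 2 * m%:R)); first by rewrite lerDl.
  apply: psdmx_bounded hW _.
  by rewrite -mxtrace_ptraceA hpt mxtrace_scalar rmorphM rmorph_nat mulr_natr.
apply: (mx_boundedW (t := 1)); first by rewrite lerDr.
apply: psdmx_bounded htr.
by apply: (psdmx_tens1 m0); rewrite -[_ ⊗ 1](subrK (fstmx x)); apply: psdmxD.
Qed.

Lemma compact_DNS_feasible_set k : (0 < m)%N -> compact (DNS_feasible_set k).
Proof.
move=> m0; pose B := k ^- 2 * m%:R + 1.
have box : compact [set x : V | forall q, x ord0 q \in `[- B, B]%R].
  by apply: (@rV_compact _ _ (fun=> `[- B, B]%classic)) => _; apply: segment_compact.
apply: subclosed_compact (@closed_DNS_feasible_set k) box _.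
by move=> x /(DNS_feasible_set_bounded m0) xB q; rewrite in_itv /= -ler_norml.
Qed.

Lemma DNS_attained k : (0 < m)%N -> orthoproj P -> DNS P k = 0%:E ->
  exists W rho, DNS_feasible k W rho /\ \tr (P *m (W - rho ⊗ 1)) = 0.
Proof.
move=> m0 hP DNS0; pose F x := \tr (P *m (fstmx x - sndmx x ⊗ 1)).
have approx e : 0 < e -> exists2 x, DNS_feasible_set k x & - e < complex.Re (F x).
  move=> e0; have : ((- e)%:E < DNS P k)%E by rewrite DNS0 lte_fin oppr_lt0.
  case/ereal_sup_gt => _ [y /DNS_valuesP[W [rho [hWrho hy]]] <-]; rewrite lte_fin => ey.
  by exists (pair_rV W rho); rewrite /DNS_feasible_set /F /= fstmx_pair sndmx_pair ?hy.
have F_cont : continuous (fun x => complex.Re (F x)).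
  apply/Rlinear_form_Re/Rlinear_mxtrace/Rlinear_mull.
  exact: Rlinear_mxB (Rlinear_fstmx _ _ _) (Rlinear_tensmxr _ (Rlinear_sndmx _ _ _)).
have [|x0 /set_mem hx0 x0_max] := compact_EVT_max _ (@compact_DNS_feasible_set k m0)
    (continuous_subspaceT F_cont).
  by have [x hx _] := approx 1 ltr01; exists x.
exists (fstmx x0), (sndmx x0); split => //.
have F_le0 : F x0 <= 0.
  case: hx0 => _ hWrho _ _.
  by rewrite -oppr_ge0 -raddfN -mulmxN opprB /=; apply: mxtrace_orthoproj_ge0.
have ReF_ge0 : 0 <= complex.Re (F x0).
  rewrite leNgt; apply/negP => ReF_lt0.
  have /approx[x hx] : 0 < - complex.Re (F x0) by rewrite oppr_gt0.
  by rewrite opprK ltNge x0_max // inE.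
apply/eqP; rewrite -/(F x0) eq_le F_le0 -(RRe_real (ler0_real F_le0)).
by rewrite -(rmorph0 (real_complex R)) lecR.
Qed.

End Attainment.

Section Optimal.
Variables (R : realType) (n m : nat) (P : 'M[R[i]]_(n * m)).
Hypotheses (m0 : (0 < m)%N) (hP : orthoproj P).
Local Notation Ups := (Upsilon_values P).
Hypothesis Ups_sup : has_sup Ups.
Local Notation u := (sup Ups).

Lemma DNS_le0 k : (DNS P k <= 0)%E.
Proof. by apply/ereal_supP => _ [x hx <-]; rewrite lee_fin (DNS_values_le0 hP hx). Qed.

Lemma DNS_sqrt_sup : 0 < u -> DNS P (Num.sqrt u) = 0%:E.
Proof.
move=> u0; apply/eqP; rewrite eq_le DNS_le0 /=; apply/lee_subgt0Pr => e e0.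
rewrite sub0e; pose t := u^-1 + e / m%:R.
have t0 : 0 < t by rewrite addr_gt0 ?invr_gt0 ?divr_gt0 ?ltr0n.
have tu : t^-1 < u by rewrite -[u]invrK ltf_pV2 ?posrE ?invr_gt0 // ltrDl divr_gt0 ?ltr0n.
have /sup_adherent/(_ Ups_sup)[s Ups_s] : 0 < u - t^-1 by rewrite subr_gt0.
rewrite opprB addrCA subrr addr0 => ts.
have s0 : 0 < s by rewrite (lt_trans _ ts) ?invr_gt0.
have [x hx sx] := DNS_values_of_Upsilon hP s0 (sup_upper_bound Ups_sup Ups_s) Ups_s.
apply: le_ereal_sup_tmp; exists x%:E; first by exists x.
rewrite lee_fin (le_trans _ sx) // mulNr lerN2 -ler_pdivlMr ?ltr0n //.
have : s^-1 < t by rewrite -[t]invrK ltf_pV2 ?posrE ?invr_gt0.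
by rewrite /t; lra.
Qed.

Lemma le_sqrt_sup k : 0 < k -> DNS P k = 0%:E -> k <= Num.sqrt u.
Proof.
move=> k0 /(DNS_attained m0 hP)[W [rho [hWrho hPX]]].
have k2u : k ^+ 2 <= u by apply/sup_upper_bound/(Upsilon_values_sqr k0 hWrho hPX).
have u_ge0 : 0 <= u := le_trans (sqr_ge0 k) k2u.
by move: k2u; rewrite -{1}(sqr_sqrtr u_ge0) ler_pXn2r ?nnegrE ?sqrtr_ge0 ?(ltW k0).
Qed.

Lemma kappaNS_sqrt_sup : 0 < u -> kappaNS P = (Num.sqrt u)%:E.
Proof.
move=> u0; apply/eqP; rewrite eq_le; apply/andP; split.
  by apply/ereal_supP => _ [k [k0 hk] <-]; rewrite lee_fin le_sqrt_sup.
by apply: ereal_sup_ubound; exists (Num.sqrt u) => //; split; rewrite ?sqrtr_gt0 ?DNS_sqrt_sup.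
Qed.

End Optimal.

Theorem theorem2 (R : realType) (n m r : nat) (E : 'I_r -> 'M[R[i]]_(m, n))
    (P : 'M[R[i]]_(n * m)) :
  (0 < n)%N -> (0 < m)%N ->
  is_channel E -> support_proj (choi E) P ->
  exists u : R,
    [/\ Upsilon P = u%:E,
        (* sqrt Upsilon is the maximum of { k > 0 : D^NS(K,k) = 0 } *)
        0 < Num.sqrt u /\ DNS P (Num.sqrt u) = (0%:E),
        (forall k : R, 0 < k -> DNS P k = (0%:E) -> k <= Num.sqrt u),
        kappaNS P = (Num.sqrt u)%:E
      & oneshot_NS_Q P = Num.floor (Num.sqrt u)].
Proof.
move=> n0 m0 hE hJP; have hP := support_proj_orthoproj hJP.
have Ups1 := Upsilon_values1 P n0.
have Ups_sup : has_sup (Upsilon_values P).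
  by split; [exists 1 | exact: has_ubound_Upsilon_values hE hJP].
have u0 : 0 < sup (Upsilon_values P) by apply: lt_le_trans ltr01 (sup_upper_bound Ups_sup Ups1).
have kappa := kappaNS_sqrt_sup m0 hP Ups_sup u0.
exists (sup (Upsilon_values P)); split.
- by rewrite /Upsilon ereal_sup_EFin //; [case: Ups_sup | exists 1].
- by rewrite sqrtr_gt0 DNS_sqrt_sup.
- exact: le_sqrt_sup.
- exact: kappa.
- by rewrite /oneshot_NS_Q kappa.
Qed.
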